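(* Let $N\in\boldsymbol{\Pi}_{q,r}$. Let $x\in\mathbb{R}^q$ be nonzero and $y\in\mathbb{R}^r$ be such that $\begin{bmatrix}x\\ y\end{bmatrix}^\top N\begin{bmatrix}x\\ y\end{bmatrix}\ge 0$. Then there exists $Z\in\mathcal{Z}_r(N)$ such that $\begin{bmatrix}x\\ y\end{bmatrix}=\begin{bmatrix}I\\ Z\end{bmatrix}x$, i.e., $y=Zx$.
   Context: $\mathbb{S}^k$ denotes the real symmetric $k\times k$ matrices; for symmetric matrices, $A\ge 0$ means positive semidefinite. $A^\dagger$ is the Moore–Penrose pseudo-inverse. Any $N\in\mathbb{S}^{q+r}$ is partitioned as $N=\begin{bmatrix}N_{11}&N_{12}\\ N_{21}&N_{22}\end{bmatrix}$ with $N_{11}\in\mathbb{S}^q$, $N_{22}\in\mathbb{S}^r$. The generalized Schur complement is $N\mid N_{22}:=N_{11}-N_{12}N_{22}^\dagger N_{21}$. The set $\boldsymbol{\Pi}_{q,r}$ consists of all $N\in\mathbb{S}^{q+r}$ with $N_{22}\le 0$, $N\mid N_{22}\ge 0$ and $\ker N_{22}\subseteq\ker N_{12}$. Define $\mathcal{Z}_r(N)=\{Z\in\mathbb{R}^{r\times q}:\begin{bmatrix}I_q\\ Z\end{bmatrix}^\top N\begin{bmatrix}I_q\\ Z\end{bmatrix}\ge 0\}$. *)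

From HB Require Import structures.
From mathcomp Require Import all_boot all_order all_algebra.
From mathcomp Require Import reals.
From Stdlib Require Import ClassicalEpsilon.
Set Implicit Arguments. Unset Strict Implicit. Unset Printing Implicit Defensive.
Import Order.TTheory GRing.Theory Num.Theory.
Local Open Scope ring_scope.

Definition symmx (R : realType) n (A : 'M[R]_n) : Prop := A^T = A.

Definition psd (R : realType) n (A : 'M[R]_n) : Prop :=
  symmx A /\ forall v : 'cV[R]_n, 0 <= (v^T *m A *m v) 0 0.

Definition nsd (R : realType) n (A : 'M[R]_n) : Prop := psd (- A).

Definition is_mpinv (R : realType) m n (A : 'M[R]_(m, n)) (X : 'M[R]_(n, m)) : Prop :=
  [/\ A *m X *m A = A, X *m A *m X = X, (A *m X)^T = A *m X & (X *m A)^T = X *m A].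

(* Moore-Penrose pseudo-inverse: the (unique, existing) solution of the
   Penrose equations, chosen by classical epsilon *)
Definition mpinv (R : realType) m n (A : 'M[R]_(m, n)) : 'M[R]_(n, m) :=
  epsilon (inhabits 0) (is_mpinv A).

Definition schur (R : realType) q r (N : 'M[R]_(q + r)) : 'M[R]_q :=
  ulsubmx N - ursubmx N *m mpinv (drsubmx N) *m dlsubmx N.

Definition Pi_set (R : realType) q r (N : 'M[R]_(q + r)) : Prop :=
  [/\ symmx N, nsd (drsubmx N), psd (schur N) &
      forall v : 'cV[R]_r, drsubmx N *m v = 0 -> ursubmx N *m v = 0].

Definition Zset (R : realType) q r (N : 'M[R]_(q + r)) (Z : 'M[R]_(r, q)) : Prop :=
  psd ((col_mx 1%:M Z)^T *m N *m col_mx 1%:M Z).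

From HB Require Import structures.
From mathcomp Require Import all_boot all_order all_algebra.
From mathcomp Require Import reals.
From Stdlib Require Import ClassicalEpsilon.
From mathcomp Require Import ring lra.
Set Implicit Arguments. Unset Strict Implicit.
Import Order.TTheory GRing.Theory Num.Theory.
Local Open Scope ring_scope.

(* Write C := N22, B := N12 and K := (C^+)^T B^T. The kernel condition gives
   B C^+ C = B, which completes the square:
     [u; v]^T N [u; v] = u^T (N | C) u + (v + K u)^T C (v + K u).
   For x and y as in the statement put d := y + K x, s := x^T (N | C) x >= 0
   and c := d^T C d <= 0, so s + c >= 0. Any Z = d w^T - K with w^T x = 1
   satisfies Z x = y, and its quadratic form is (N | C) + c w w^T. This is
   positive semidefinite for w := x / |x|^2 when s = 0 (then c = 0), and for
   w := (N | C) x / s when s > 0, by Cauchy-Schwarz for (N | C) and c >= -s. *)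

Section SchurComplement.
Variable R : realType.

Lemma trmx_mul_self_eq0 n (w : 'cV[R]_n) : (w^T *m w) 0 0 = 0 -> w = 0.
Proof.
rewrite !mxE => sum_sq0.
have sq0 i : w^T 0 i * w i 0 = 0.
  by apply: (psumr_eq0P _ sum_sq0) => // j _; rewrite mxE -expr2 sqr_ge0.
apply/matrixP => i j; rewrite (ord1 j) mxE.
by move: (sq0 i); rewrite mxE -expr2 => /eqP; rewrite sqrf_eq0 => /eqP.
Qed.

Lemma row_free_mul_tr_unit k n (G : 'M[R]_(k, n)) :
  row_free G -> G *m G^T \in unitmx.
Proof.
move=> freeG; rewrite -row_free_unit; apply: inj_row_free => v vGG0.
have vG0 : v *m G = 0.
  apply: trmx_inj; rewrite trmx0; apply: trmx_mul_self_eq0.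
  by rewrite trmxK trmx_mul mulmxA -(mulmxA v) vGG0 mul0mx mxE.
by apply: (row_free_inj freeG); rewrite vG0 mul0mx.
Qed.

Lemma is_mpinv_full_rank_factor m k n (F : 'M[R]_(m, k)) (G : 'M[R]_(k, n)) :
  row_free G -> row_free F^T ->
  is_mpinv (F *m G) (G^T *m invmx (G *m G^T) *m invmx (F^T *m F) *m F^T).
Proof.
move=> freeG freeFt.
have uG := row_free_mul_tr_unit freeG.
have uF : F^T *m F \in unitmx.
  by have := row_free_mul_tr_unit freeFt; rewrite trmxK.
set X := G^T *m _ *m _ *m _.
have FGX : F *m G *m X = F *m invmx (F^T *m F) *m F^T.
  rewrite /X -!mulmxA (mulmxA G) (mulmxA (G *m G^T)) mulmxV //.
  by rewrite mul1mx !mulmxA.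
have XFG : X *m (F *m G) = G^T *m invmx (G *m G^T) *m G.
  rewrite /X -!mulmxA (mulmxA F^T) (mulmxA _ (F^T *m F)) mulVmx //.
  by rewrite mul1mx !mulmxA.
split.
- by rewrite FGX -!mulmxA (mulmxA F^T) (mulmxA _ (F^T *m F)) mulVmx // mul1mx.
- by rewrite XFG /X -!mulmxA (mulmxA G) (mulmxA _ (G *m G^T)) mulVmx // mul1mx.
- by rewrite FGX !trmx_mul trmxK -!mulmxA trmx_inv trmx_mul trmxK.
- by rewrite XFG !trmx_mul trmxK -!mulmxA trmx_inv trmx_mul trmxK.
Qed.

Lemma mpinvP m n (A : 'M[R]_(m, n)) : is_mpinv A (mpinv A).
Proof.
apply: epsilon_spec; rewrite -(mulmx_base A); eexists.
apply: is_mpinv_full_rank_factor; first exact: row_base_free.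
by rewrite /row_free mxrank_tr; exact: col_base_full.
Qed.

Lemma mulmx_mpinv_kernel p m n (B : 'M[R]_(p, n)) (C : 'M[R]_(m, n)) :
  (forall v : 'cV[R]_n, C *m v = 0 -> B *m v = 0) ->
  B *m mpinv C *m C = B.
Proof.
move=> kerCB; have [CPC _ _ _] := mpinvP C.
have B_annihilates : B *m (1%:M - mpinv C *m C) = 0.
  apply/matrixP => i j; rewrite mxE.
  have kerCcol : C *m col j (1%:M - mpinv C *m C) = 0.
    by rewrite colE mulmxA mulmxBr mulmx1 mulmxA CPC subrr mul0mx.
  have := congr1 (fun M : 'M[R]_(p, 1) => M i 0) (kerCB _ kerCcol).
  by rewrite colE mulmxA -colE !mxE.
apply/esym/eqP; rewrite -subr_eq0 -[X in X - _]mulmx1 -mulmxA -mulmxBr.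
by rewrite B_annihilates.
Qed.

Definition schur_shift q r (N : 'M[R]_(q + r)) : 'M[R]_(r, q) :=
  (mpinv (drsubmx N))^T *m (ursubmx N)^T.

Lemma quad_form_schur q r (N : 'M[R]_(q + r)) k
    (u : 'M[R]_(q, k)) (v : 'M[R]_(r, k)) :
  symmx N ->
  (forall w : 'cV[R]_r, drsubmx N *m w = 0 -> ursubmx N *m w = 0) ->
  (col_mx u v)^T *m N *m col_mx u v =
  u^T *m schur N *m u +
  (v + schur_shift N *m u)^T *m drsubmx N *m (v + schur_shift N *m u).
Proof.
move=> symN kerCB; rewrite /schur /schur_shift.
set A := ulsubmx N; set B := ursubmx N; set C := drsubmx N; set P := mpinv C.
have BPC : B *m P *m C = B by exact: mulmx_mpinv_kernel.
have CPB k' (X : 'M[R]_(q, k')) : C *m (P^T *m (B^T *m X)) = B^T *m X.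
  by rewrite !mulmxA -{2}BPC !trmx_mul mulmxA /C trmx_drsub symN.
have BPC' k' (X : 'M[R]_(r, k')) : B *m (P *m (C *m X)) = B *m X.
  by rewrite !mulmxA BPC.
have Bt : dlsubmx N = B^T by rewrite /B trmx_ursub symN.
rewrite Bt -{1}(submxK N) Bt tr_col_mx mul_row_block mul_row_col.
rewrite !linearD /= !trmx_mul !trmxK !mulmxDl !mulmxN !mulNmx -!mulmxA.
rewrite !CPB !BPC' -/A -/B -/C.
set e := u^T *m (B *m (P *m (B^T *m u))); set b := v^T *m (B^T *m u).
by rewrite (addrC (v^T *m _)) (addrC b e) [RHS]addrCA [_ + (e + b)]addrA
  addrNK addrC.
Qed.

Lemma symmx_form_sym n (S : 'M[R]_n) (u v : 'cV[R]_n) :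
  symmx S -> (u^T *m S *m v) 0 0 = (v^T *m S *m u) 0 0.
Proof.
move=> symS; transitivity ((u^T *m S *m v)^T 0 0); first by rewrite [RHS]mxE.
by rewrite !trmx_mul trmxK symS mulmxA.
Qed.

Lemma psd_form_CauchySchwarz n (S : 'M[R]_n) (x v : 'cV[R]_n) :
  psd S -> 0 < (x^T *m S *m x) 0 0 ->
  ((v^T *m S *m x) 0 0) ^+ 2 <= (v^T *m S *m v) 0 0 * (x^T *m S *m x) 0 0.
Proof.
move=> [symS psdS] s_gt0.
set s := (x^T *m S *m x) 0 0; set b := (v^T *m S *m x) 0 0.
set a := (v^T *m S *m v) 0 0; set t := b / s.
have xSv : (x^T *m S *m v) 0 0 = b by rewrite symmx_form_sym.
have := psdS (v - t *: x).
have -> : (v - t *: x)^T = v^T - t *: x^T by rewrite linearB /= linearZ.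
rewrite !mulmxBl !mulmxBr -!scalemxAl -!scalemxAr.
have entry (M1 M2 M3 M4 : 'M[R]_1) :
    (M1 - t *: M2 - (t *: M3 - t *: (t *: M4))) 0 0 =
    M1 0 0 - t * M2 0 0 - (t * M3 0 0 - t * (t * M4 0 0)) by rewrite !mxE.
rewrite entry -/a -/b -/s xSv => form_ge0.
have ts : t * s = b by rewrite /t mulfVK // gt_eqF.
have := mulr_ge0 (ltW s_gt0) form_ge0.
have -> : s * (a - t * b - (t * b - t * (t * s))) = a * s - b ^+ 2.
  by rewrite -ts; ring.
by rewrite subr_ge0.
Qed.

Lemma psd_rank_one_lower n (S : 'M[R]_n) (x : 'cV[R]_n) (c : R) :
  psd S -> x != 0 -> c <= 0 -> 0 <= (x^T *m S *m x) 0 0 + c ->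
  exists2 w : 'cV[R]_n, w^T *m x = 1%:M & psd (S + c *: (w *m w^T)).
Proof.
move=> psdS x0 c_le0 sc_ge0; have [symS formS] := psdS.
set s := (x^T *m S *m x) 0 0 in sc_ge0.
suff [w wx1 lowered] : exists2 w : 'cV[R]_n, w^T *m x = 1%:M &
    forall v : 'cV[R]_n, 0 <= (v^T *m S *m v) 0 0 + c * ((w^T *m v) 0 0) ^+ 2.
  exists w => //; split.
    by rewrite /symmx linearD /= linearZ /= trmx_mul trmxK symS.
  move=> v; rewrite mulmxDr mulmxDl -scalemxAr -scalemxAl mxE.
  have -> : v^T *m (w *m w^T) *m v = (w^T *m v)^T *m (w^T *m v).
    by rewrite trmx_mul trmxK !mulmxA.
  rewrite [w^T *m v]mx11_scalar; set a := (w^T *m v) 0 0.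
  rewrite tr_scalar_mx -scalar_mxM scale_scalar_mx [_%:M 0 0]mxE mulr1n.
  by rewrite -expr2 lowered.
have [s0 | s_neq0] := eqVneq s 0.
  have c0 : c = 0 by lra.
  have xx_neq0 : (x^T *m x) 0 0 != 0.
    by apply: contra x0 => /eqP/trmx_mul_self_eq0 ->.
  exists (((x^T *m x) 0 0)^-1 *: x) => [|v]; last by rewrite c0 mul0r addr0.
  rewrite linearZ /= -scalemxAl {2}[x^T *m x]mx11_scalar.
  by rewrite scale_scalar_mx mulVf.
have s_gt0 : 0 < s by rewrite lt_def s_neq0 formS.
exists (s^-1 *: (S *m x)) => [|v].
  rewrite linearZ /= -scalemxAl trmx_mul symS [x^T *m S *m x]mx11_scalar.
  by rewrite scale_scalar_mx mulVf.
have -> : ((s^-1 *: (S *m x))^T *m v) 0 0 = s^-1 * (v^T *m S *m x) 0 0.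
  rewrite linearZ /= trmx_mul symS -scalemxAl mxE.
  by rewrite (symmx_form_sym x v symS).
have := psd_form_CauchySchwarz v psdS s_gt0; rewrite -/s.
set b := (v^T *m S *m x) 0 0; set a := (v^T *m S *m v) 0 0 => CS.
have CS_div : b ^+ 2 / s <= a by rewrite ler_pdivrMr.
have : - s * (s^-1 * b) ^+ 2 <= c * (s^-1 * b) ^+ 2.
  by rewrite ler_wpM2r ?sqr_ge0 //; lra.
have -> : - s * (s^-1 * b) ^+ 2 = - (b ^+ 2 / s) by field.
lra.
Qed.

End SchurComplement.

Theorem mainTheorem6 (R : realType) (q r : nat) (N : 'M[R]_(q + r))
    (x : 'cV[R]_q) (y : 'cV[R]_r) :
  Pi_set N -> x != 0 ->
  0 <= ((col_mx x y)^T *m N *m col_mx x y) 0 0 ->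
  exists Z : 'M[R]_(r, q), Zset N Z /\ col_mx x y = col_mx 1%:M Z *m x.
Proof.
move=> [symN [_ nsdC] psdS kerCB] x0.
have quad := quad_form_schur _ _ symN kerCB.
set K := schur_shift N in quad; set C := drsubmx N in nsdC quad.
set d := y + K *m x; set c := (d^T *m C *m d) 0 0.
rewrite quad mxE -/d -/c => sc_ge0.
have c_le0 : c <= 0 by move: (nsdC d); rewrite mulmxN mulNmx mxE oppr_ge0.
have [w wx1 psdSw] := psd_rank_one_lower psdS x0 c_le0 sc_ge0.
exists (d *m w^T - K); split.
  rewrite /Zset quad trmx1 mul1mx !mulmx1 subrK !trmx_mul trmxK.
  rewrite !mulmxA -2!(mulmxA w) [d^T *m C *m d]mx11_scalar.
  by rewrite mul_mx_scalar -scalemxAl.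
by rewrite mul_col_mx mul1mx mulmxBl -mulmxA wx1 mulmx1 addrK.
Qed.
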